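(* There exist absolute constants $C>0$, $c>0$ and $m_0$ such that for all positive integers $n,m$ with $m\le \frac{\sqrt{n}}{2}$, \[\operatorname{scp}(K_n-K_m)\ \ge\ (2m-1)n-Cm^2,\] and if moreover $m\ge m_0$, \[\operatorname{scp}(K_n-K_m)\ \le\ (2m-1)n-cm^2.\] (That is, $(2m-1)n-O(m^2)\le \operatorname{scp}(K_n-K_m)\le (2m-1)n-\Omega(m^2)$ for $m\le\sqrt n/2$.)
   Context: $K_n-K_m$ denotes the graph obtained from $K_n$ by deleting all edges among a fixed set of $m$ of its vertices. A clique partition of a graph $G$ is a family of cliques of $G$ such that every edge has both endpoints in exactly one member; $\operatorname{scp}(G)$ is the minimum of the sum of the sizes of the cliques over all clique partitions of $G$. *)

From mathcomp Require Import all_boot all_order all_algebra.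
Set Implicit Arguments. Unset Strict Implicit. Unset Printing Implicit Defensive.

(* The graph K_n - K_m on vertex set 'I_n: the m deleted-clique vertices are
   0, ..., m-1; two distinct vertices are adjacent unless both are < m. *)
Definition KnKm_adj (n m : nat) (x y : 'I_n) : bool :=
  (x != y) && ~~ ((x < m) && (y < m)).

Definition is_clique (n m : nat) (A : {set 'I_n}) : bool :=
  [forall x in A, forall y in A, (x != y) ==> KnKm_adj m x y].

Definition is_clique_partition (n m : nat) (P : {set {set 'I_n}}) : bool :=
  [forall A in P, is_clique m A] &&
  [forall x, forall y, KnKm_adj m x y ==>
     (#|[set A in P | (x \in A) && (y \in A)]| == 1)].

Definition cp_weight (n : nat) (P : {set {set 'I_n}}) : nat :=
  \sum_(A in P) #|A|.

Definition edge_partition (n m : nat) : {set {set 'I_n}} :=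
  [set A : {set 'I_n} | (#|A| == 2) && is_clique m A].

Lemma edge_partition_cp (n m : nat) : is_clique_partition m (edge_partition n m).
Proof.
apply/andP; split.
  by apply/forall_inP => A; rewrite inE => /andP[].
apply/forallP => x; apply/forallP => y; apply/implyP => adj.
have nxy : x != y by case/andP: adj.
apply/cards1P; exists [set x; y]; apply/setP => A.
rewrite !inE; apply/idP/idP.
  case/andP=> /andP[/eqP cA _] /andP[xA yA].
  rewrite eq_sym eqEcard cA cards2 nxy leqnn andbT.
  by apply/subsetP => z; rewrite !inE => /orP[]/eqP->.
move/eqP->; rewrite !inE !eqxx orbT /= andbT cards2 nxy /=.
apply/forall_inP => u; rewrite !inE => /orP[]/eqP->;
apply/forall_inP => v; rewrite !inE => /orP[]/eqP->; apply/implyP => //;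
move=> H; first [by rewrite eqxx in H | move: adj; rewrite /KnKm_adj H /=; by rewrite [(y < m) && _]andbC => /andP[]].
Qed.

Lemma exists_clique_partition (n m : nat) :
  exists k, [exists P : {set {set 'I_n}}, is_clique_partition m P && (cp_weight P == k)].
Proof.
exists (cp_weight (edge_partition n m)); apply/existsP; exists (edge_partition n m).
by rewrite edge_partition_cp eqxx.
Qed.

Definition scp (n m : nat) : nat := ex_minn (exists_clique_partition n m).

(* Call the vertices outside the deleted K_m kept, and let z be the
   largest number of kept vertices in one clique of the partition.  A kept vertex
   lies in at least m cliques (one per deleted vertex, as no clique holds two
   deleted ones) and in at least (n - m - 1) / (z - 1) cliques (to cover its edges
   to the other kept vertices).  If z < 2m - 1 and n >= 4m^2 this gives degree
   >= 2m - 1 at each of the n - m kept vertices.  Otherwise fix a clique Z with z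
   kept vertices: two vertices of Z are covered only by Z, so a vertex outside Z
   adjacent to the kept part of Z has degree >= z.  Summing over the >= m - 1
   deleted vertices outside Z, the z kept vertices in Z and the n - m - z kept
   vertices outside Z gives weight >= z (2m - 1 + n - m - z) >= (2m - 1)(n - m).  The clique made of vertex 0 and all kept vertices, together with
   every remaining edge as a 2-clique, has weight 1 + (2m - 1)(n - m). *)

From mathcomp Require Import all_boot all_order all_algebra.
From mathcomp Require Import zify lra.
Set Implicit Arguments. Unset Strict Implicit. Unset Printing Implicit Defensive.

Lemma card_ord_lt n k : k <= n -> #|[set x : 'I_n | x < k]| = k.
Proof.
move=> kn; have inj_w : injective (widen_ord kn).
  by move=> a b /(congr1 val) /= ab; apply: val_inj.
rewrite -[RHS](card_ord k) -(card_imset _ inj_w); apply: eq_card => x.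
rewrite !inE; apply/idP/imsetP => [xk|[y _ ->]]; last exact: (ltn_ord y).
by exists (Ordinal xk) => //; apply: val_inj.
Qed.

Section Graph.
Variables n m : nat.
Implicit Types (x y v w : 'I_n) (A S Z : {set 'I_n}) (P : {set {set 'I_n}}).

Definition deleted := [set x : 'I_n | x < m].

Lemma card_deleted : m <= n -> #|deleted| = m.
Proof. exact: card_ord_lt. Qed.

Lemma card_kept : m <= n -> #|~: deleted| = n - m.
Proof. by move=> mn; rewrite cardsCs setCK card_ord card_deleted. Qed.

Lemma KnKm_adjE x y :
  KnKm_adj m x y = (x != y) && ((x \notin deleted) || (y \notin deleted)).
Proof. by rewrite /KnKm_adj !inE negb_and. Qed.

Lemma KnKm_adj_sym x y : KnKm_adj m x y = KnKm_adj m y x.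
Proof. by rewrite !KnKm_adjE eq_sym orbC. Qed.

Lemma clique_adj A x y :
  is_clique m A -> x \in A -> y \in A -> x != y -> KnKm_adj m x y.
Proof. by move=> /forall_inP/(_ x) cA xA yA; move/forall_inP/(_ y yA)/implyP: (cA xA). Qed.

Lemma pair_clique x y : KnKm_adj m x y -> is_clique m [set x; y].
Proof.
move=> xy; apply/forall_inP => u /set2P[]->; apply/forall_inP => v /set2P[]->;
  by rewrite ?eqxx ?xy ?implybT // KnKm_adj_sym xy implybT.
Qed.

Lemma clique_card_deleted A : is_clique m A -> #|A :&: deleted| <= 1.
Proof.
move=> cA; apply/card_le1_eqP => x y /setIP[xA xI] /setIP[yA yI].
apply/eqP; apply: contraT; rewrite eq_sym => xy.
by have := clique_adj cA xA yA xy; rewrite KnKm_adjE xI yI xy.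
Qed.

Definition cp_degree P v := #|[set A in P | v \in A]|.

Lemma cp_weight_degree P : cp_weight P = \sum_v cp_degree P v.
Proof.
rewrite /cp_weight /cp_degree.
under eq_bigr => A _ do rewrite -sum1_card.
rewrite (exchange_big_dep predT) //=; apply: eq_bigr => v _.
by rewrite -sum1_card; apply: eq_bigl => A; rewrite inE.
Qed.

Section CliquePartition.
Variable P : {set {set 'I_n}}.
Hypothesis cpP : is_clique_partition m P.

Lemma cp_clique A : A \in P -> is_clique m A.
Proof. by case/andP: cpP => /forall_inP cP _; apply: cP. Qed.

Lemma cp_cover x y :
  KnKm_adj m x y -> exists2 A, A \in P & [set B in P | (x \in B) && (y \in B)] = [set A].
Proof.
case/andP: cpP => _ /forallP/(_ x)/forallP/(_ y)/implyP cover /cover/cards1P[A PA].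
exists A => //.
by have := set11 A; rewrite -PA inE => /andP[].
Qed.

Lemma cp_cover_uniq A B x y : A \in P -> B \in P ->
  x \in A -> y \in A -> x \in B -> y \in B -> x != y -> A = B.
Proof.
move=> PA PB xA yA xB yB xy.
have [C _ PC] := cp_cover (clique_adj (cp_clique PA) xA yA xy).
have: A \in [set C] by rewrite -PC inE PA xA yA.
have: B \in [set C] by rewrite -PC inE PB xB yB.
by rewrite !inE => /eqP-> /eqP->.
Qed.

Lemma card_le_cp_degree_mul v S k :
  {in S, forall x, KnKm_adj m v x} ->
  (forall A, A \in P -> v \in A -> #|A :&: S| <= k) ->
  #|S| <= cp_degree P v * k.
Proof.
move=> adjS Ak; rewrite /cp_degree -sum_nat_const; set Pv := [set A in P | v \in A].
apply: (@leq_trans (\sum_(A in Pv) #|A :&: S|)); last first.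
  by apply: leq_sum => A; rewrite inE => /andP[]; apply: Ak.
have -> : \sum_(A in Pv) #|A :&: S| = \sum_(x in S) \sum_(A in Pv) (x \in A : nat).
  rewrite exchange_big; apply: eq_bigr => A _.
  rewrite -sum1_card big_mkcond [RHS]big_mkcond; apply: eq_bigr => x _.
  by rewrite inE andbC; case: (x \in S).
rewrite -sum1_card; apply: leq_sum => x xS.
have [A PA PvxA] := cp_cover (adjS x xS).
have: A \in [set A] := set11 A; rewrite -PvxA inE => /andP[_ /andP[vA xA]].
by rewrite (bigD1 A) ?inE ?PA ?vA //= xA.
Qed.

Lemma card_le_cp_degree v S :
  {in S, forall x, KnKm_adj m v x} ->
  (forall A, A \in P -> v \in A -> #|A :&: S| <= 1) ->
  #|S| <= cp_degree P v.
Proof. by move=> adjS A1; rewrite -[cp_degree P v]muln1; apply: card_le_cp_degree_mul. Qed.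

Lemma card_deleted_le_cp_degree w : w \notin deleted -> #|deleted| <= cp_degree P w.
Proof.
move=> wK; apply: card_le_cp_degree => [x xI|A PA _].
  by rewrite KnKm_adjE wK andbT; apply: contraNneq wK => ->.
exact: clique_card_deleted (cp_clique PA).
Qed.

Lemma card_le_cp_degree_outside Z v S : Z \in P -> v \notin Z -> S \subset Z ->
  {in S, forall x, KnKm_adj m v x} -> #|S| <= cp_degree P v.
Proof.
move=> PZ vZ SZ adjS; apply: card_le_cp_degree => // A PA vA.
apply/card_le1_eqP => x y /setIP[xA xS] /setIP[yA yS].
apply/eqP; apply: contraT; rewrite eq_sym => xy.
have AZ := cp_cover_uniq PA PZ xA yA (subsetP SZ _ xS) (subsetP SZ _ yS) xy.
by move: vZ; rewrite -AZ vA.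
Qed.

Lemma card_kept_le_cp_degree_mul w z : w \notin deleted ->
  (forall A, A \in P -> #|A :&: ~: deleted| <= z) ->
  #|~: deleted| - 1 <= cp_degree P w * (z - 1).
Proof.
move=> wK Az; have wK' : w \in ~: deleted by rewrite inE.
rewrite (cardsD1 w) wK' add1n subn1 /=.
apply: card_le_cp_degree_mul => [x /setD1P[xw xK]|A PA wA].
  by rewrite KnKm_adjE eq_sym xw wK.
have := Az A PA; rewrite setIDA (cardsD1 w (A :&: _)) in_setI wA wK' /=.
by move=> Az'; rewrite leq_subRL ?Az' // (leq_trans (leq_addr _ _) Az').
Qed.

Lemma cp_weight_split :
  cp_weight P = \sum_(v in deleted) cp_degree P v + \sum_(v in ~: deleted) cp_degree P v.
Proof.
rewrite cp_weight_degree (bigID (mem deleted)) /=; congr (_ + _).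
by apply: eq_bigl => v; rewrite in_setC.
Qed.

Lemma sum_cp_degree_ge (V : {set 'I_n}) d :
  {in V, forall v, d <= cp_degree P v} -> #|V| * d <= \sum_(v in V) cp_degree P v.
Proof. by move=> Vd; rewrite -sum_nat_const; apply: leq_sum. Qed.

Lemma cp_weight_ge_small_cliques z : 0 < m -> 4 * m * m <= n -> z < 2 * m - 1 ->
  (forall A, A \in P -> #|A :&: ~: deleted| <= z) ->
  (2 * m - 1) * (n - m) <= cp_weight P.
Proof.
move=> m_gt0 mn zm Az; have cK : #|~: deleted| = n - m by apply: card_kept; nia.
rewrite cp_weight_split mulnC -cK; apply: leq_trans (leq_addl _ _).
apply: sum_cp_degree_ge => w; rewrite in_setC => wK.
have := card_kept_le_cp_degree_mul wK Az; rewrite cK.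
nia.
Qed.

Lemma cp_weight_ge_clique Z : Z \in P -> m <= n ->
  #|Z :&: ~: deleted| * (2 * m - 1 + (n - m - #|Z :&: ~: deleted|)) <= cp_weight P.
Proof.
move=> PZ mn; set K := ~: deleted; set z := #|Z :&: K|.
have outside_ge u : u \notin Z -> {in Z :&: K, forall x, KnKm_adj m u x} ->
    z <= cp_degree P u.
  by move=> uZ; apply: card_le_cp_degree_outside PZ uZ (subsetIl _ _).
have del_ge : (m - 1) * z <= \sum_(v in deleted) cp_degree P v.
  rewrite (big_setID Z) /=; apply: leq_trans (leq_addl _ _).
  apply: leq_trans (sum_cp_degree_ge _); last first.
    move=> u /setDP[uI uZ]; apply: outside_ge => // x /setIP[_ xK].
    have xK' : x \notin deleted by rewrite -in_setC.
    by rewrite KnKm_adjE xK' orbT andbT; apply: contraNneq xK' => <-.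
  apply: leq_mul => //.
  have := clique_card_deleted (cp_clique PZ); rewrite cardsD card_deleted // setIC; lia.
have kept_ge : z * m + (n - m - z) * z <= \sum_(v in K) cp_degree P v.
  rewrite (big_setID Z) /=; apply: leq_add.
    rewrite -(card_deleted mn) /z setIC; apply: sum_cp_degree_ge => w /setIP[wK _].
    by apply: card_deleted_le_cp_degree; rewrite -in_setC.
  have -> : n - m - z = #|K :\: Z| by rewrite cardsD setIC card_kept.
  apply: sum_cp_degree_ge => w /setDP[wK wZ]; apply: outside_ge => // x /setIP[xZ xK].
  have xK' : x \notin deleted by rewrite -in_setC.
  by rewrite KnKm_adjE xK' orbT andbT; apply: contraNneq wZ => ->.
rewrite cp_weight_split -/K; move: del_ge kept_ge; nia.
Qed.

Lemma cp_weight_ge : 0 < m -> 4 * m * m <= n -> (2 * m - 1) * (n - m) <= cp_weight P.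
Proof.
move=> m_gt0 mn; have mn' : m <= n by nia.
set z := \max_(A in P) #|A :&: ~: deleted|.
have Az A : A \in P -> #|A :&: ~: deleted| <= z by move=> PA; apply: leq_bigmax_cond.
have [zm|mz] := ltnP z (2 * m - 1); first exact: cp_weight_ge_small_cliques zm Az.
have P_gt0 : 0 < #|P|.
  rewrite lt0n; apply: contraTneq mz => /card0_eq P0.
  by rewrite /z big_pred0 // -ltnNge; lia.
have [Z PZ zZ] := eq_bigmax_cond (fun A => #|A :&: ~: deleted|) P_gt0.
have zK : #|Z :&: ~: deleted| <= n - m by rewrite -card_kept // subset_leq_card ?subsetIr.
have := cp_weight_ge_clique PZ mn'; rewrite -zZ -/z in zK *; nia.
Qed.

End CliquePartition.

Lemma scp_le_cp_weight P : is_clique_partition m P -> scp n m <= cp_weight P.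
Proof.
move=> cpP; rewrite /scp; case: ex_minnP => k _; apply.
by apply/existsP; exists P; rewrite cpP eqxx.
Qed.

Lemma scp_ge : 0 < m -> 4 * m * m <= n -> (2 * m - 1) * (n - m) <= scp n m.
Proof.
move=> m_gt0 mn; rewrite /scp; case: ex_minnP => k /existsP[P /andP[cpP /eqP <-]] _.
exact: cp_weight_ge.
Qed.

Lemma card2_set2 A x y : #|A| = 2 -> x \in A -> y \in A -> x != y -> A = [set x; y].
Proof.
move=> cA xA yA xy; apply/eqP; rewrite eq_sym eqEcard cards2 xy cA leqnn andbT.
by apply/subsetP => u /set2P[]->.
Qed.

Definition edges_outside S := [set A in edge_partition n m | ~~ (A \subset S)].

Definition extend_by_edges S := S |: edges_outside S.

Lemma extend_by_edges_cp S : is_clique m S -> is_clique_partition m (extend_by_edges S).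
Proof.
move=> cS; have edge_set2 A x y :
    A \in edges_outside S -> x \in A -> y \in A -> x != y -> A = [set x; y].
  by rewrite !inE => /andP[/andP[/eqP cA _] _]; apply: card2_set2.
rewrite /extend_by_edges; apply/andP; split.
  by apply/forall_inP => A /setU1P[->//|]; rewrite !inE => /andP[/andP[]].
apply/forallP => x; apply/forallP => y; apply/implyP => xy.
have x_ne_y : x != y by case/andP: xy.
have [/andP[xS yS]|xyS] := boolP ((x \in S) && (y \in S)).
  apply/card1P; exists S => A; rewrite in_set in_setU1 [RHS]inE.
  apply/idP/eqP => [|->]; last by rewrite eqxx xS yS.
  case/andP=> /predU1P[//|EA] /andP[xA yA]; move: (EA).
  rewrite (edge_set2 _ _ _ EA xA yA x_ne_y) !inE => /andP[_].
  by case/negP; apply/subsetP => u /set2P[]->.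
have Exy : [set x; y] \in edges_outside S.
  rewrite !inE cards2 x_ne_y pair_clique //=; apply: contra xyS => /subsetP xyS.
  by rewrite !xyS ?set21 ?set22.
apply/card1P; exists [set x; y] => A; rewrite in_set in_setU1 [RHS]inE.
apply/idP/eqP => [|->]; last by rewrite Exy orbT set21 set22.
case/andP=> /predU1P[AS|EA] /andP[xA yA]; last exact: edge_set2.
by case/negP: xyS; rewrite -AS xA yA.
Qed.

Lemma cp_weight_extend_by_edges S :
  cp_weight (extend_by_edges S) = #|S| + 2 * #|edges_outside S|.
Proof.
rewrite /cp_weight big_setU1 /=; last by rewrite !inE subxx andbF.
rewrite mulnC -sum_nat_const; congr (_ + _).
by apply: eq_bigr => A; rewrite !inE => /andP[/andP[/eqP]].
Qed.

Definition spokes := [set x : 'I_n | 0 < x < m].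

Definition hub := ~: spokes.

Lemma card_spokes : 0 < m -> m <= n -> #|spokes| = m - 1.
Proof.
move=> m_gt0 mn; have -> : spokes = deleted :\: [set x : 'I_n | x < 1].
  by apply/setP => x; rewrite !inE -leqNgt andbC.
have sub01 : [set x : 'I_n | x < 1] \subset deleted.
  by apply/subsetP => x; rewrite !inE => /leq_trans; apply.
by rewrite cardsD (setIidPr sub01) card_deleted // card_ord_lt //; apply: leq_trans mn.
Qed.

Lemma hub_clique : is_clique m hub.
Proof.
apply/forall_inP => x xH; apply/forall_inP => y yH; apply/implyP => xy.
rewrite KnKm_adjE xy -negb_and; apply: contra xy; move: xH yH; rewrite !inE.
by move=> xH yH /andP[xm ym]; apply/eqP; apply: val_inj => /=; lia.
Qed.

Lemma card_edges_outside_hub :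
  0 < m -> m <= n -> #|edges_outside hub| <= (m - 1) * (n - m).
Proof.
move=> m_gt0 mn; pose spoke_edge (p : 'I_n * 'I_n) := [set p.1; p.2].
have spoke_adj u v : u \in spokes -> KnKm_adj m u v -> v \in ~: deleted.
  by rewrite in_setC KnKm_adjE !inE => /andP[_ um] /andP[_]; rewrite um.
have sub : edges_outside hub \subset spoke_edge @: setX spokes (~: deleted).
  apply/subsetP => A; rewrite !inE => /andP[/andP[/cards2P[x [y [xy ->]]] cA] nsub].
  have adj := clique_adj cA (set21 x y) (set22 x y) xy.
  move: nsub; rewrite subUset !sub1set !in_setC negb_and !negbK => /orP[xL|yL].
    by apply/imsetP; exists (x, y); rewrite // in_setX xL (spoke_adj x).
  apply/imsetP; exists (y, x); last by rewrite /spoke_edge setUC.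
  by rewrite in_setX yL (spoke_adj y) // KnKm_adj_sym.
apply: leq_trans (subset_leq_card sub) _; apply: leq_trans (leq_imset_card _ _) _.
by rewrite cardsX card_spokes // card_kept.
Qed.

Lemma scp_le : 0 < m -> m <= n -> scp n m <= 1 + (2 * m - 1) * (n - m).
Proof.
move=> m_gt0 mn; apply: leq_trans (scp_le_cp_weight (extend_by_edges_cp hub_clique)) _.
rewrite cp_weight_extend_by_edges cardsCs setCK card_ord card_spokes //.
have := card_edges_outside_hub m_gt0 mn; nia.
Qed.

End Graph.

Import Order.TTheory GRing.Theory Num.Theory.
Local Open Scope ring_scope.

Lemma le_sqrt_half_nat (R : rcfType) n m :
  (m%:R : R) <= Num.sqrt n%:R / 2 -> (4 * m * m <= n)%N.
Proof.
move=> le_m; have le_2m : 2 * (m%:R : R) <= Num.sqrt n%:R by lra.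
have : (2 * m%:R) * (2 * m%:R) <= (n%:R : R).
  rewrite -[leRHS](sqr_sqrtr (ler0n R n)) expr2.
  by apply: ler_pM => //; rewrite mulr_ge0 ?ler0n.
by rewrite -(ler_nat R) !natrM; nra.
Qed.

Theorem mainTheorem8 (R : rcfType) :
  exists (C c : R) (m0 : nat), 0 < C /\ 0 < c /\
  forall n m : nat, (0 < n)%N -> (0 < m)%N ->
    (m%:R : R) <= Num.sqrt (n%:R : R) / 2 ->
    ((2 * (m%:R : R) - 1) * n%:R - C * m%:R ^+ 2 <= ((scp n m)%:R : R)) /\
    ((m0 <= m)%N -> ((scp n m)%:R : R) <= (2 * (m%:R : R) - 1) * n%:R - c * m%:R ^+ 2).
Proof.
exists 2, 1, 2%N; do 2!split => //.
move=> n m _ m_gt0 /le_sqrt_half_nat mn; have m_le_n : (m <= n)%N by nia.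
have real_2m1 : ((2 * m - 1)%N%:R : R) = 2 * m%:R - 1 by rewrite natrB ?natrM //; lia.
rewrite expr2 -real_2m1; split => [|m_ge2].
  have : ((2 * m - 1) * n <= scp n m + 2 * m * m)%N by have := scp_ge m_gt0 mn; nia.
  by rewrite -(ler_nat R) !natrD !natrM; lra.
have : (scp n m + m * m <= (2 * m - 1) * n)%N by have := scp_le m_gt0 m_le_n; nia.
by rewrite -(ler_nat R) !natrD !natrM; lra.
Qed.
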